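(* Let $a,b,c\in\mathbb{R}$ and let $\Omega\subset\mathbb{R}^4$ be an open set, with coordinates $(\tau,u,v,w)$, on which $u,v,w$ are pairwise distinct and $H^{(2)}:=u^2+v^2+w^2-2(a+b+c)\tau>0$. On $\Omega$ consider the vector fields $$U=\Big(\frac{c}{u-v}+\frac{b}{u-w}\Big)\partial_u+\Big(\frac{a}{v-w}+\frac{c}{v-u}\Big)\partial_v+\Big(\frac{b}{w-u}+\frac{a}{w-v}\Big)\partial_w,\qquad E=u\partial_u+v\partial_v+w\partial_w,$$ and the bivector field $$\Lambda=(E-2\tau U)\wedge\partial_\tau+E\wedge U .$$ Then $\Lambda$ is a Poisson bivector (i.e. its Schouten bracket with itself vanishes, $[\Lambda,\Lambda]=0$), and the vector field $\partial_\tau+U$ is Hamiltonian with respect to $\Lambda$ with Hamiltonian function $H=\tfrac12\ln H^{(2)}$, namely $\partial_\tau+U=\Lambda(dH)$.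
   Context: The vector field $\partial_\tau+U$ is the suspension (time-extension) of the autonomous system $u'=\frac{c}{u-v}+\frac{b}{u-w}$, $v'=\frac{a}{v-w}+\frac{c}{v-u}$, $w'=\frac{b}{w-u}+\frac{a}{w-v}$, with $\tau$ the time variable. For vector fields $X,Y$ and a one-form $\alpha$, the contraction convention is $(X\wedge Y)(\alpha)=\alpha(X)\,Y-\alpha(Y)\,X$, extended linearly to sums of such bivectors. *)

From Stdlib Require Import Reals.
From Coquelicot Require Import Coquelicot.
Open Scope R_scope.

(* Points of R^4 with coordinates (tau, u, v, w); index 0 = tau, 1 = u, 2 = v, 3 = w. *)
Definition pt : Type := (R * R * R * R)%type.

Definition coord (p : pt) (i : nat) : R :=
  let '(t, u, v, w) := p in
  match i with 0%nat => t | 1%nat => u | 2%nat => v | 3%nat => w | _ => 0 end.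

Definition upd (p : pt) (i : nat) (s : R) : pt :=
  let '(t, u, v, w) := p in
  match i with
  | 0%nat => (s, u, v, w) | 1%nat => (t, s, v, w)
  | 2%nat => (t, u, s, w) | 3%nat => (t, u, v, s) | _ => p end.

Definition partial (i : nat) (f : pt -> R) (p : pt) : R :=
  Derive (fun s => f (upd p i s)) (coord p i).

Definition sum4 (f : nat -> R) : R := f 0%nat + f 1%nat + f 2%nat + f 3%nat.

Definition open4 (O : pt -> Prop) : Prop :=
  forall p, O p -> exists eps : R, 0 < eps /\
    forall q : pt, (forall i, (i < 4)%nat -> Rabs (coord q i - coord p i) < eps) -> O q.

Definition vfield := nat -> pt -> R.
Definition bivector := nat -> nat -> pt -> R.

(* (X /\ Y)^{ij} = X^i Y^j - X^j Y^i, so that (X/\Y)(alpha) = alpha(X) Y - alpha(Y) X. *)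
Definition wedge (X Y : vfield) : bivector := fun i j p => X i p * Y j p - X j p * Y i p.

Definition badd (L M : bivector) : bivector := fun i j p => L i j p + M i j p.

Definition contract (L : bivector) (alpha : nat -> pt -> R) : vfield :=
  fun j p => sum4 (fun i => alpha i p * L i j p).

Definition dfun (f : pt -> R) : nat -> pt -> R := fun i p => partial i f p.

Definition schouten_self (L : bivector) (i j k : nat) (p : pt) : R :=
  2 * sum4 (fun l => L l i p * partial l (L j k) p
                   + L l j p * partial l (L k i) p
                   + L l k p * partial l (L i j) p).

Definition is_poisson_on (O : pt -> Prop) (L : bivector) : Prop :=
  forall p, O p -> forall i j k, (i < 4)%nat -> (j < 4)%nat -> (k < 4)%nat ->
    schouten_self L i j k p = 0.

Definition tau_ (p : pt) := coord p 0. Definition u_ (p : pt) := coord p 1.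
Definition v_ (p : pt) := coord p 2. Definition w_ (p : pt) := coord p 3.

Definition Ufield (a b c : R) : vfield := fun i p =>
  let u := u_ p in let v := v_ p in let w := w_ p in
  match i with
  | 1%nat => c / (u - v) + b / (u - w)
  | 2%nat => a / (v - w) + c / (v - u)
  | 3%nat => b / (w - u) + a / (w - v)
  | _ => 0 end.

Definition Efield : vfield := fun i p =>
  match i with 1%nat => u_ p | 2%nat => v_ p | 3%nat => w_ p | _ => 0 end.

Definition dtau : vfield := fun i _ => match i with 0%nat => 1 | _ => 0 end.

Definition Lambda (a b c : R) : bivector :=
  badd (wedge (fun i p => Efield i p - 2 * tau_ p * Ufield a b c i p) dtau)
       (wedge Efield (Ufield a b c)).

Definition H2 (a b c : R) (p : pt) : R :=
  u_ p ^ 2 + v_ p ^ 2 + w_ p ^ 2 - 2 * (a + b + c) * tau_ p.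

Definition Ham (a b c : R) (p : pt) : R := / 2 * ln (H2 a b c p).

(* Since [Lambda] is antisymmetric, its Schouten bracket is an alternating
   3-tensor, so only its four components with strictly increasing indices need
   to be computed.  For the Hamiltonian part write [A = E - 2 tau U]; the
   identity [u U^u + v U^v + w U^w = a + b + c] gives [dH2(A) = 2 H2],
   [dH2(d_tau) = -2(a+b+c)], [dH2(E) = 2(u^2+v^2+w^2)] and [dH2(U) = 2(a+b+c)],
   hence [Lambda(dH2) = 2 H2 (d_tau + U)]; finally [dH = dH2 / (2 H2)]. *)
From Stdlib Require Import Reals Lra Lia.
From Coquelicot Require Import Coquelicot.
Open Scope R_scope.

Ltac simplify_Derive :=
  repeat match goal with
  | |- context [Derive ?f ?x] =>
      let l := fresh "l" in evar (l : R);
      rewrite (is_derive_unique f x l);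
        [| subst l; auto_derive; [repeat split; auto | reflexivity]];
      subst l
  end.

Ltac pose_differences huv huw hvw :=
  pose proof (Rminus_eq_contra _ _ huv); pose proof (Rminus_eq_contra _ _ huw);
  pose proof (Rminus_eq_contra _ _ hvw);
  pose proof (Rminus_eq_contra _ _ (not_eq_sym huv));
  pose proof (Rminus_eq_contra _ _ (not_eq_sym huw));
  pose proof (Rminus_eq_contra _ _ (not_eq_sym hvw)).

Lemma alternating_zero4 (S : nat -> nat -> nat -> R) :
  (forall i j k, S i j k = S j k i) ->
  (forall i j k, S i k j = - S i j k) ->
  S 0%nat 1%nat 2%nat = 0 -> S 0%nat 1%nat 3%nat = 0 ->
  S 0%nat 2%nat 3%nat = 0 -> S 1%nat 2%nat 3%nat = 0 ->
  forall i j k, (i < 4)%nat -> (j < 4)%nat -> (k < 4)%nat -> S i j k = 0.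
Proof.
intros Scyc Sswap S012 S013 S023 S123 i j k Hi Hj Hk.
destruct i as [|[|[|[|i]]]]; try lia;
destruct j as [|[|[|[|j]]]]; try lia;
destruct k as [|[|[|[|k]]]]; try lia;
match goal with
| |- S ?x ?y ?z = 0 =>
    pose proof (Scyc x y z); pose proof (Scyc y z x);
    pose proof (Sswap x y z); pose proof (Sswap y z x); pose proof (Sswap z x y)
end; lra.
Qed.

Definition bivector_antisym (L : bivector) : Prop :=
  forall i j p, L j i p = - L i j p.

Lemma wedge_antisym (X Y : vfield) : bivector_antisym (wedge X Y).
Proof. intros i j p; unfold wedge; ring. Qed.

Lemma badd_antisym (L M : bivector) :
  bivector_antisym L -> bivector_antisym M -> bivector_antisym (badd L M).
Proof. intros HL HM i j p; unfold badd; rewrite HL, HM; ring. Qed.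

Lemma partial_opp (i : nat) (f g : pt -> R) (p : pt) :
  (forall q, g q = - f q) -> partial i g p = - partial i f p.
Proof.
intros Hgf; unfold partial.
rewrite (Derive_ext _ (fun s => - f (upd p i s))) by (intro; apply Hgf).
apply Derive_opp.
Qed.

Lemma schouten_self_cyclic (L : bivector) i j k p :
  schouten_self L i j k p = schouten_self L j k i p.
Proof. unfold schouten_self, sum4; ring. Qed.

Lemma schouten_self_swap (L : bivector) i j k p : bivector_antisym L ->
  schouten_self L i k j p = - schouten_self L i j k p.
Proof.
intros HL.
assert (Hd : forall x y l, partial l (L y x) p = - partial l (L x y) p)
  by (intros; apply partial_opp, HL).
unfold schouten_self, sum4; rewrite !(Hd j k), !(Hd i j), !(Hd k i); ring.
Qed.

Lemma is_poisson_on_alternating (O : pt -> Prop) (L : bivector) :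
  bivector_antisym L ->
  (forall p, O p ->
     schouten_self L 0 1 2 p = 0 /\ schouten_self L 0 1 3 p = 0 /\
     schouten_self L 0 2 3 p = 0 /\ schouten_self L 1 2 3 p = 0) ->
  is_poisson_on O L.
Proof.
intros HL H0 p Op.
destruct (H0 p Op) as (S012 & S013 & S023 & S123).
apply (alternating_zero4 (fun i j k => schouten_self L i j k p)); auto.
- intros; apply schouten_self_cyclic.
- intros; apply schouten_self_swap, HL.
Qed.

Definition pairing (alpha : nat -> pt -> R) (X : vfield) (p : pt) : R :=
  sum4 (fun i => alpha i p * X i p).

Lemma contract_wedge (X Y : vfield) alpha j p :
  contract (wedge X Y) alpha j p = pairing alpha X p * Y j p - pairing alpha Y p * X j p.
Proof. unfold contract, pairing, wedge, sum4; ring. Qed.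

Lemma contract_badd (L M : bivector) alpha j p :
  contract (badd L M) alpha j p = contract L alpha j p + contract M alpha j p.
Proof. unfold contract, badd, sum4; ring. Qed.

Lemma Lambda_antisym (a b c : R) : bivector_antisym (Lambda a b c).
Proof. apply badd_antisym; apply wedge_antisym. Qed.

Lemma schouten_Lambda_increasing (a b c t u v w : R) :
  u <> v -> u <> w -> v <> w ->
  schouten_self (Lambda a b c) 0 1 2 (t, u, v, w) = 0 /\
  schouten_self (Lambda a b c) 0 1 3 (t, u, v, w) = 0 /\
  schouten_self (Lambda a b c) 0 2 3 (t, u, v, w) = 0 /\
  schouten_self (Lambda a b c) 1 2 3 (t, u, v, w) = 0.
Proof.
intros huv huw hvw; pose_differences huv huw hvw.
unfold schouten_self, sum4, partial, Lambda, badd, wedge, Efield, Ufield, dtau,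
  tau_, u_, v_, w_; simpl.
repeat split; simplify_Derive; field; unfold Rminus in *; repeat split; auto.
Qed.

Lemma Ufield_radial_sum (a b c u v w : R) : u <> v -> u <> w -> v <> w ->
  u * (c / (u - v) + b / (u - w)) + v * (a / (v - w) + c / (v - u))
  + w * (b / (w - u) + a / (w - v)) = a + b + c.
Proof.
intros huv huw hvw; pose_differences huv huw hvw.
field; unfold Rminus in *; repeat split; auto.
Qed.

Lemma dfun_H2 (a b c t u v w : R) :
  dfun (H2 a b c) 0 (t, u, v, w) = - 2 * (a + b + c) /\
  dfun (H2 a b c) 1 (t, u, v, w) = 2 * u /\
  dfun (H2 a b c) 2 (t, u, v, w) = 2 * v /\
  dfun (H2 a b c) 3 (t, u, v, w) = 2 * w.
Proof.
unfold dfun, partial, H2, tau_, u_, v_, w_; simpl.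
repeat split; simplify_Derive; ring.
Qed.

Lemma dfun_Ham (a b c : R) (p : pt) i : 0 < H2 a b c p ->
  dfun (Ham a b c) i p = / (2 * H2 a b c p) * dfun (H2 a b c) i p.
Proof.
destruct p as [[[t u] v] w]; intros Hpos.
unfold H2, tau_, u_, v_, w_ in Hpos; simpl in Hpos.
unfold dfun, partial, Ham, H2, tau_, u_, v_, w_.
destruct i as [|[|[|[|i]]]]; simpl; simplify_Derive; field; lra.
Qed.

Lemma contract_dfun_Ham (a b c : R) (L : bivector) j p : 0 < H2 a b c p ->
  contract L (dfun (Ham a b c)) j p = / (2 * H2 a b c p) * contract L (dfun (H2 a b c)) j p.
Proof.
intros Hpos; unfold contract, sum4.
rewrite !dfun_Ham by assumption; ring.
Qed.

Lemma contract_Lambda_dH2 (a b c t u v w : R) j :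
  u <> v -> u <> w -> v <> w ->
  contract (Lambda a b c) (dfun (H2 a b c)) j (t, u, v, w) =
  2 * H2 a b c (t, u, v, w) * (dtau j (t, u, v, w) + Ufield a b c j (t, u, v, w)).
Proof.
intros huv huw hvw.
pose proof (Ufield_radial_sum a b c u v w huv huw hvw) as Hsum.
destruct (dfun_H2 a b c t u v w) as (D0 & D1 & D2 & D3).
unfold Lambda; rewrite contract_badd, !contract_wedge.
unfold pairing, sum4; rewrite D0, D1, D2, D3.
unfold H2, Efield, Ufield, dtau, tau_, u_, v_, w_; simpl.
(* Replacing [a + b + c] by the radial sum makes the goal a polynomial
   identity in [t, u, v, w] and the components of [U]. *)
rewrite <- Hsum.
destruct j as [|[|[|[|j]]]]; simpl; ring.
Qed.

Theorem mainTheorem1 (a b c : R) (Omega : pt -> Prop) :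
  open4 Omega ->
  (forall p, Omega p ->
     u_ p <> v_ p /\ u_ p <> w_ p /\ v_ p <> w_ p /\ 0 < H2 a b c p) ->
  is_poisson_on Omega (Lambda a b c) /\
  (forall p, Omega p -> forall j, (j < 4)%nat ->
     dtau j p + Ufield a b c j p = contract (Lambda a b c) (dfun (Ham a b c)) j p).
Proof.
intros _ HOmega; split.
- apply is_poisson_on_alternating; [apply Lambda_antisym |].
  intros [[[t u] v] w] Op.
  destruct (HOmega _ Op) as (huv & huw & hvw & _).
  exact (schouten_Lambda_increasing a b c t u v w huv huw hvw).
- intros [[[t u] v] w] Op j Hj.
  destruct (HOmega _ Op) as (huv & huw & hvw & Hpos).
  rewrite contract_dfun_Ham, contract_Lambda_dH2 by assumption.
  field; lra.
Qed.
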